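(* Let $G$ be an additive group and let $X$ and $\preceq$ be as described below. Then $(X,\preceq)$ is an upper-semilinear $\vee$-semilattice.
   Context: A function $f$ defined on an interval $(\alpha,\beta)$ is piecewise constant from the left if for every $x\in(\alpha,\beta)$ there is $\varepsilon>0$ with $f$ constant on $[x-\varepsilon,x]$. $X$ is the set of pairs $(f,a_f)$ where $a_f>0$ is a real number and $f:(a_f,+\infty)\to G$ is piecewise constant from the left with $f|_{(b_f,+\infty)}\equiv 0$ for some $b_f\ge a_f$. The partial order is: $(f,a_f)\preceq(g,a_g)$ iff $a_f\le a_g$ and $f|_{(a_g,+\infty)}=g$. A $\vee$-semilattice is a poset in which any two elements have a supremum; it is upper-semilinear if every upper cone $\{y: x\preceq y\}$ is linearly ordered. *)

From Stdlib Require Import Reals.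
From mathcomp Require Import all_boot all_algebra.

Set Implicit Arguments.
Unset Strict Implicit.
Open Scope R_scope.

(* An element (f, a_f) of X is represented by a pair p = (a, f) with a : R and
   f : R -> G a total function of which only the values on (a, +oo) matter. *)
Definition elt (G : zmodType) : Type := (R * (R -> G))%type.

Definition pw_const_left (G : zmodType) (a : R) (f : R -> G) : Prop :=
  forall x, a < x -> exists eps, 0 < eps /\
    forall y, a < y -> x - eps <= y <= x -> f y = f x.

Definition inX (G : zmodType) (p : elt G) : Prop :=
  0 < fst p /\ @pw_const_left G (fst p) (snd p) /\
  exists b, fst p <= b /\ forall x, b < x -> snd p x = (0 : G)%R.

Definition eqX (G : zmodType) (p q : elt G) : Prop :=
  fst p = fst q /\ forall x, fst p < x -> snd p x = snd q x.

Definition leX (G : zmodType) (p q : elt G) : Prop :=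
  fst p <= fst q /\ forall x, fst q < x -> snd p x = snd q x.

Definition is_supX (G : zmodType) (p q s : elt G) : Prop :=
  inX s /\ leX p s /\ leX q s /\
  forall u, inX u -> leX p u -> leX q u -> leX s u.

Definition upper_semilinear_join_semilattice (G : zmodType) : Prop :=
  (forall p : elt G, inX p -> leX p p) /\
  (forall p q r : elt G, inX p -> inX q -> inX r -> leX p q -> leX q r -> leX p r) /\
  (forall p q : elt G, inX p -> inX q -> leX p q -> leX q p -> eqX p q) /\
  (forall p q : elt G, inX p -> inX q -> exists s, is_supX p q s) /\
  (forall x y z : elt G, inX x -> inX y -> inX z -> leX x y -> leX x z ->
     leX y z \/ leX z y).

(* Every element above (f, a_f) is a restriction of f, so two such elements are
   compared by their starting points alone: upper cones are chains.  The join of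
   (f, a_f) and (g, a_g) is f restricted to (c, +oo), where c is the supremum of
   max(a_f, a_g) and of the points beyond it at which f and g disagree; this
   supremum exists because f and g both vanish eventually. *)
From Stdlib Require Import Reals.
From mathcomp Require Import all_boot all_algebra.
From Stdlib Require Import Lra Classical.
Local Open Scope R_scope.

Lemma exists_least_agreement_bound {T : Type} (f g : R -> T) (m : R) :
  (exists b, forall x, b < x -> f x = g x) ->
  exists c, m <= c /\ (forall x, c < x -> f x = g x) /\
    forall a, m <= a -> (forall x, a < x -> f x = g x) -> c <= a.
Proof.
intros [b Hb].
set D := fun t => t = m \/ (m <= t /\ f t <> g t).
have D_bounded : bound D.
{ exists (Rmax m b); intros t [-> | [_ Hfg]]; [apply Rmax_l |].
  destruct (Rle_dec t (Rmax m b)) as [Ht | Ht]; [exact Ht |].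
  exfalso; apply Hfg, Hb.
  apply Rnot_le_lt in Ht; eapply Rle_lt_trans; [apply Rmax_r | exact Ht]. }
destruct (completeness D D_bounded (ex_intro D m (or_introl (erefl m))))
  as [c [Hub Hlub]].
have Hmc : m <= c by apply Hub; left.
exists c; split; [exact Hmc | split].
- intros x Hx; apply NNPP; intros Hfg.
  have : x <= c by apply Hub; right; split; [lra | exact Hfg].
  lra.
- intros a Hma Ha; apply Hlub; intros t [-> | [_ Hfg]]; [exact Hma |].
  destruct (Rle_dec t a) as [Ht | Ht]; [exact Ht |].
  exfalso; apply Hfg, Ha; lra.
Qed.

Section OrderOnX.

Variable G : zmodType.

Lemma leX_refl (p : elt G) : leX p p.
Proof. by split; [apply Rle_refl |]. Qed.

Lemma leX_trans (p q r : elt G) : leX p q -> leX q r -> leX p r.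
Proof.
intros [Hpq fpq] [Hqr fqr]; split; [lra |].
intros x Hx; rewrite fpq; [exact: fqr | lra].
Qed.

Lemma leX_antisym (p q : elt G) : leX p q -> leX q p -> eqX p q.
Proof. intros [Hpq fpq] [Hqp _]; split; [lra |]; intros x Hx; apply fpq; lra. Qed.

Lemma leX_upper_cone_total (x y z : elt G) :
  leX x y -> leX x z -> leX y z \/ leX z y.
Proof.
intros [_ fxy] [_ fxz].
destruct (Rle_dec (fst y) (fst z)) as [Hyz | Hzy].
- left; split; [exact Hyz |]; intros t Ht; rewrite -fxy; [exact: fxz | lra].
- right; split; [lra |]; intros t Ht; rewrite -fxz; [exact: fxy | lra].
Qed.

Lemma leX_restrict (p : elt G) (c : R) : fst p <= c -> leX p (c, snd p).
Proof. by split. Qed.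

Lemma inX_restrict (p : elt G) (c : R) : inX p -> fst p <= c -> inX (c, snd p).
Proof.
intros [Hp0 [Hpw [b [_ Hb]]]] Hc; split; [simpl; lra | split].
- intros x Hx; simpl in *; destruct (Hpw x ltac:(lra)) as [eps [Heps Hy]].
  exists eps; split; [exact Heps |]; intros y Hy1; apply Hy; lra.
- exists (Rmax c b); split; [apply Rmax_l |]; intros x Hx; apply Hb.
  eapply Rle_lt_trans; [apply Rmax_r | exact Hx].
Qed.

Lemma inX_eventually_agree (p q : elt G) :
  inX p -> inX q -> exists b, forall x, b < x -> snd p x = snd q x.
Proof.
intros [_ [_ [bp [_ Hp]]]] [_ [_ [bq [_ Hq]]]]; exists (Rmax bp bq); intros x Hx.
pose proof (Rmax_l bp bq); pose proof (Rmax_r bp bq); rewrite Hp ?Hq //; lra.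
Qed.

Lemma exists_supX (p q : elt G) : inX p -> inX q -> exists s, is_supX p q s.
Proof.
intros Hp Hq.
have [c [Hmc [Hagree Hleast]]] :=
  exists_least_agreement_bound _ _ (Rmax (fst p) (fst q))
    (inX_eventually_agree p q Hp Hq).
have Hpc : fst p <= c by eapply Rle_trans; [apply Rmax_l | exact Hmc].
have Hqc : fst q <= c by eapply Rle_trans; [apply Rmax_r | exact Hmc].
exists (c, snd p).
split; [exact: inX_restrict | split; [exact: leX_restrict | split]].
- by split; [| intros x Hx; symmetry; apply Hagree].
- intros u _ [Hpu fpu] [Hqu fqu].
  split; [| exact fpu]; apply Hleast; [exact: Rmax_lub |].
  by intros x Hx; rewrite fpu ?fqu.
Qed.

End OrderOnX.

Theorem lemma4 (G : zmodType) : upper_semilinear_join_semilattice G.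
Proof.
split; [| split; [| split; [| split]]].
- intros p _; exact: leX_refl.
- intros p q r _ _ _; exact: leX_trans.
- intros p q _ _; exact: leX_antisym.
- exact: exists_supX.
- intros x y z _ _ _; exact: leX_upper_cone_total.
Qed.
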